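(* Let $v,w$ be positive integers, $\theta\in[0,1]$, and let $K_{v,w}$ be the complete bipartite graph with parts $V$, $W$, $|V|=v$, $|W|=w$. For $1\le i\le 4$ let $P^i_m(K_{v,w})$ be the probability that the robber remains free after $m$ moves of the tipsy cop and drunken robber game when the game starts in Position $i$ (whenever that position exists). Then for all $m\ge 0$, \begin{align*} P_m^1(K_{v,w})&=\left(\tfrac{v-1}{v}\right)^{\lfloor\frac{m+3}{4}\rfloor}\left(\tfrac{w-1}{w}\right)^{\lfloor\frac{m+1}{4}\rfloor},\\ P_m^2(K_{v,w})&=\theta^{\lfloor\frac{m}{2}\rfloor}\left(\tfrac{v-1}{v}\right)^{\lfloor\frac{m}{4}\rfloor}\left(\tfrac{w-1}{w}\right)^{\lfloor\frac{m+2}{4}\rfloor},\\ P_m^3(K_{v,w})&=\left(\tfrac{v-1}{v}\right)^{\lfloor\frac{m+1}{4}\rfloor}\left(\tfrac{w-1}{w}\right)^{\lfloor\frac{m+3}{4}\rfloor},\\ P_m^4(K_{v,w})&=\theta^{\lfloor\frac{m}{2}\rfloor}\left(\tfrac{v-1}{v}\right)^{\lfloor\frac{m+2}{4}\rfloor}\left(\tfrac{w-1}{w}\right)^{\lfloor\frac{m}{4}\rfloor}. \end{align*}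
   Context: Tipsy cop and drunken robber game on a finite connected graph $G$: a cop and a robber are placed at distinct vertices. Moves are numbered $1,2,3,\dots$; the robber makes the odd-numbered moves and the cop the even-numbered moves, and on each move the mover must move to a vertex adjacent to its current vertex (staying put is not allowed). The robber always moves to a neighbor chosen uniformly at random. The cop, independently at each of her moves, with probability $\theta$ moves to a neighbor chosen uniformly at random, and with probability $1-\theta$ makes a directed move to a neighbor lying on a shortest path to the robber's current vertex (in particular onto the robber's vertex if it is adjacent). All random choices are independent. The robber is captured (and the game ends) as soon as both occupy the same vertex. Starting positions on $K_{v,w}$: Position 1: the cop is at a vertex of $V$ and the robber at a vertex of $W$; Position 2: cop and robber are at two distinct vertices of $V$; Position 3: the robber is at a vertex of $V$ and the cop at a vertex of $W$; Position 4: cop and robber are at two distinct vertices of $W$. *)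

From mathcomp Require Import all_boot all_order all_algebra.
Set Implicit Arguments. Unset Strict Implicit. Unset Printing Implicit Defensive.
Import Order.TTheory GRing.Theory Num.Theory.
Local Open Scope ring_scope.

(* Generic tipsy cop / drunken robber game on a finite graph (T, adj),
   adj a symmetric irreflexive relation. *)
Section Game.
Variables (T : finType) (adj : rel T) (R : realFieldType) (theta : R).

Fixpoint ball (k : nat) (x : T) : {set T} :=
  match k with
  | 0 => [set x]
  | k'.+1 => ball k' x :|: [set u | [exists y in ball k' x, adj y u]]
  end.

(* graph distance (equal to #|T| if y is unreachable from x) *)
Definition gdist (x y : T) : nat :=
  find (fun k => y \in ball k x) (iota 0 #|T|).

Definition nbrs (x : T) : {set T} := [set u | adj x u].

Definition dir_nbrs (c r : T) : {set T} :=
  [set u | adj c u && ((gdist u r).+1 == gdist c r)%N].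

Definition avg (S : {set T}) (f : T -> R) : R :=
  (\sum_(u in S) f u) / #|S|%:R.

(* surv m rturn c r = probability that the robber is still free after m
   further moves, cop at c, robber at r (c <> r), with the next move being
   the robber's iff rturn. *)
Fixpoint surv (m : nat) (rturn : bool) (c r : T) : R :=
  match m with
  | 0 => 1
  | m'.+1 =>
    if rturn then
      avg (nbrs r) (fun r' => if r' == c then 0 else surv m' false c r')
    else
      theta * avg (nbrs c) (fun c' => if c' == r then 0 else surv m' true c' r)
      + (1 - theta) *
        avg (dir_nbrs c r) (fun c' => if c' == r then 0 else surv m' true c' r)
  end.

(* probability the robber is free after m moves; move 1 is the robber's *)
Definition Pfree (m : nat) (c r : T) : R := surv m true c r.

End Game.

(* complete bipartite graph K_{v,w}: V = inl 'I_v, W = inr 'I_w *)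
Definition Kvw_vertex (v w : nat) : finType := ('I_v + 'I_w)%type.

Definition Kvw_adj (v w : nat) : rel (Kvw_vertex v w) :=
  fun x y => match x, y with
             | inl _, inr _ => true
             | inr _, inl _ => true
             | _, _ => false
             end.

From mathcomp Require Import all_boot all_order all_algebra zify ring.
Set Implicit Arguments. Unset Strict Implicit. Unset Printing Implicit Defensive.
Import Order.TTheory GRing.Theory Num.Theory.
Local Open Scope ring_scope.

(* After the robber's first move the game alternates between two kinds of
   positions.  When the cop is on the other side, the robber steps onto the
   cop's side and avoids her with probability (n-1)/n, n the size of that side;
   the cop then has to cross over and cannot catch him.  When both are on the
   same side, the robber crosses; a directed move of the cop then catches him,
   while a random move (probability theta) avoids him with probability (n-1)/n.
   Swapping the two sides of K_{v,w} turns Positions 3 and 4 into Positions 1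
   and 2 of K_{w,v}, so a two-step induction on m, uniform in v and w, gives
   all four formulas. *)

Section Average.
Variables (T : finType) (R : realFieldType).
Implicit Types (S : {set T}) (f g : T -> R).

Lemma eq_avg S f g : f =1 g -> avg S f = avg S g.
Proof. by move=> fg; rewrite /avg (eq_bigr g). Qed.

Lemma avg_const S f k x0 :
  x0 \in S -> {in S, forall x, f x = k} -> avg S f = k.
Proof.
move=> x0S fk; rewrite /avg (eq_bigr (fun=> k)) // sumr_const -[k *+ _]mulr_natr mulfK //.
by rewrite pnatr_eq0 -lt0n; apply/card_gt0P; exists x0.
Qed.

Lemma avg_set1 f x : avg [set x] f = f x.
Proof. by apply: (avg_const (set11 x)) => y /set1P ->. Qed.

Lemma avg_const_but1 S f k c :
  c \in S -> f c = 0 -> {in S, forall x, x != c -> f x = k} ->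
  avg S f = k * ((#|S|%:R - 1) / #|S|%:R).
Proof.
move=> cS fc fk; rewrite /avg (bigD1 c) //= fc add0r.
rewrite (eq_bigr (fun=> k)); last by move=> x /andP[xS xc]; apply: fk.
rewrite (eq_bigl [in S :\ c]); last by move=> x; rewrite in_setD1 andbC.
by rewrite sumr_const (cardsD1 c S) cS add1n -natr1 (addrK 1) -[k *+ _]mulr_natr mulrA.
Qed.

Lemma avg_imset (T' : finType) (h : T -> T') (S : {set T}) (F : T' -> R) :
  injective h -> avg (h @: S) F = avg S (F \o h).
Proof.
by move=> h_inj; rewrite /avg big_imset ?card_imset //; apply: in2W.
Qed.

End Average.

Section Distance.
Variables (T : finType) (adj : rel T).

Lemma mem_ball1 x y : (y \in ball adj 1 x) = (y == x) || adj x y.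
Proof.
rewrite /= !inE; congr (_ || _); apply/existsP/idP => [[z]|xy].
  by rewrite inE => /andP[/eqP ->].
by exists x; rewrite inE eqxx.
Qed.

Lemma gdist_ball (x y : T) (k : nat) :
  (k < #|T|)%N -> y \in ball adj k x ->
  (forall j, (j < k)%N -> y \notin ball adj j x) -> gdist adj x y = k.
Proof.
move=> kT yk ylt; rewrite /gdist; set p := (fun j => y \in ball adj j x).
have hk : has p (iota 0 #|T|) by apply/hasP; exists k; rewrite ?mem_iota.
have [lt|ge] := ltnP (find p (iota 0 #|T|)) k.
  have := nth_find 0%N hk; rewrite nth_iota ?add0n; last by move: hk; rewrite has_find size_iota.
  by rewrite /p (negbTE (ylt _ lt)).
case: ltngtP ge => // gt _; have := before_find 0%N gt.
by rewrite nth_iota ?add0n // /p yk.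
Qed.

Lemma gdist_eq0 x y : (gdist adj x y == 0%N) = (x == y).
Proof.
apply/eqP/eqP => [|<-]; last first.
  by apply: gdist_ball => [||[]//]; [apply/card_gt0P; exists x | rewrite /= inE].
rewrite /gdist; have: (0 < #|T|)%N by apply/card_gt0P; exists x.
by case: #|T| => [|n] //= _; rewrite inE; case: eqP.
Qed.

Lemma gdist_adj x y : x != y -> adj x y -> gdist adj x y = 1%N.
Proof.
move=> xy adjxy; apply: gdist_ball => [||[]//].
- by rewrite (cardD1 x) (cardD1 y) !inE eq_sym xy.
- by rewrite mem_ball1 adjxy orbT.
- by rewrite /= inE eq_sym.
Qed.

Lemma gdist_common_nbr x u y :
  x != y -> ~~ adj x y -> adj x u -> adj u y -> gdist adj x y = 2%N.
Proof.
move=> xy nxy xu uy.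
have ux : u != x by apply: contraNneq nxy => ux; rewrite -ux.
have uy' : u != y by apply: contraNneq nxy => uy'; rewrite -uy'.
apply: gdist_ball => [||[|[]]//].
- by rewrite (cardD1 x) (cardD1 u) (cardD1 y) !inE ux (eq_sym y u) uy' (eq_sym y x) xy.
- by rewrite /= !inE; apply/orP; right; apply/existsP; exists u; rewrite mem_ball1 xu orbT.
- by rewrite /= inE eq_sym.
- by rewrite mem_ball1 eq_sym (negbTE xy).
Qed.

Lemma dir_nbrs_adj c r : c != r -> adj c r -> dir_nbrs adj c r = [set r].
Proof.
move=> cr adjcr; apply/setP => u; rewrite !inE (gdist_adj cr adjcr) eqSS gdist_eq0.
by apply/andP/eqP => [[_ /eqP]|->] //; rewrite eqxx.
Qed.

Lemma mem_dir_nbrs_common c u r :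
  c != r -> ~~ adj c r -> adj c u -> adj u r -> u \in dir_nbrs adj c r.
Proof.
move=> cr ncr cu ur; rewrite inE cu (gdist_common_nbr cr ncr cu ur) gdist_adj //.
by apply: contraNneq ncr => ur'; rewrite -ur'.
Qed.

End Distance.

Section GraphIsomorphism.
Variables (T T' : finType) (adj : rel T) (adj' : rel T') (f : T -> T').
Hypotheses (f_bij : bijective f) (f_adj : forall x y, adj' (f x) (f y) = adj x y).

Let f_inj : injective f := bij_inj f_bij.

Lemma mem_ball_iso k x u : (f u \in ball adj' k (f x)) = (u \in ball adj k x).
Proof.
elim: k u => [|k IH] u /=; first by rewrite !inE (inj_eq f_inj).
rewrite !inE IH; congr (_ || _); have [g fK gK] := f_bij.
apply/existsP/existsP => [[y' /andP[]]|[y /andP[yk yu]]].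
  by rewrite -[y']gK IH f_adj => yk yu; exists (g y'); rewrite yk.
by exists (f y); rewrite IH f_adj yk.
Qed.

Lemma gdist_iso x y : gdist adj' (f x) (f y) = gdist adj x y.
Proof.
by rewrite /gdist -(bij_eq_card f_bij); apply: eq_find => k; apply: mem_ball_iso.
Qed.

Lemma iso_imset (A : {set T}) (A' : {set T'}) :
  (forall u, (f u \in A') = (u \in A)) -> A' = f @: A.
Proof.
have [g fK gK] := f_bij.
by move=> hA; apply/setP => u'; rewrite -[u']gK mem_imset.
Qed.

Lemma nbrs_iso x : nbrs adj' (f x) = f @: nbrs adj x.
Proof. by apply: iso_imset => u; rewrite !inE f_adj. Qed.

Lemma dir_nbrs_iso c r : dir_nbrs adj' (f c) (f r) = f @: dir_nbrs adj c r.
Proof. by apply: iso_imset => u; rewrite !inE f_adj !gdist_iso. Qed.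

Lemma surv_iso (R : realFieldType) (theta : R) m b c r :
  surv adj' theta m b (f c) (f r) = surv adj theta m b c r.
Proof.
elim: m b c r => [//|m IH] [] c r /=.
  by rewrite nbrs_iso avg_imset //; apply: eq_avg => u /=; rewrite (inj_eq f_inj) IH.
rewrite nbrs_iso dir_nbrs_iso !avg_imset //.
by congr (_ * _ + _ * _); apply: eq_avg => u /=; rewrite (inj_eq f_inj) IH.
Qed.

End GraphIsomorphism.

Definition Kvw_flip (v w : nat) (x : Kvw_vertex v w) : Kvw_vertex w v :=
  match x with inl i => inr i | inr j => inl j end.

Lemma Kvw_flipK (v w : nat) : cancel (@Kvw_flip v w) (@Kvw_flip w v).
Proof. by case. Qed.

Lemma surv_Kvw_flip (R : realFieldType) (theta : R) (v w : nat) m b c r :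
  surv (@Kvw_adj w v) theta m b (Kvw_flip c) (Kvw_flip r) =
  surv (@Kvw_adj v w) theta m b c r.
Proof.
apply: surv_iso; first by exists (@Kvw_flip w v); apply: Kvw_flipK.
by move=> [?|?] [?|?].
Qed.

Section CompleteBipartite.
Variables (v w : nat).
Local Notation adj := (@Kvw_adj v w).

Lemma Kvw_nbrs_inl i : nbrs adj (inl i) = inr @: [set: 'I_w].
Proof.
apply/setP => -[j|j]; rewrite inE /=; first by apply/esym/imsetP => -[].
by rewrite mem_imset ?inE //; apply: inr_inj.
Qed.

Lemma Kvw_nbrs_inr j : nbrs adj (inr j) = inl @: [set: 'I_v].
Proof.
apply/setP => -[i|i]; rewrite inE /=; last by apply/esym/imsetP => -[].
by rewrite mem_imset ?inE //; apply: inl_inj.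
Qed.

Lemma Kvw_dir_nbrs_same (i i' : 'I_v) :
  i != i' -> dir_nbrs adj (inl i) (inl i') = nbrs adj (inl i).
Proof.
move=> ii'; apply/setP => u; apply/idP/idP => [|]; first by rewrite !inE => /andP[].
by rewrite inE; case: u => [//|j _]; apply: mem_dir_nbrs_common.
Qed.

Definition avoid_prob (R : realFieldType) (n : nat) : R := (n%:R - 1) / n%:R.

Variables (R : realFieldType) (theta : R).
Local Notation S := (surv adj theta).

Lemma avg_Kvw_nbrs_inl i (F : Kvw_vertex v w -> R) :
  avg (nbrs adj (inl i)) F = avg [set: 'I_w] (F \o inr).
Proof. by rewrite Kvw_nbrs_inl avg_imset //; apply: inr_inj. Qed.

Lemma avg_Kvw_nbrs_inr j (F : Kvw_vertex v w -> R) :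
  avg (nbrs adj (inr j)) F = avg [set: 'I_v] (F \o inl).
Proof. by rewrite Kvw_nbrs_inr avg_imset //; apply: inl_inj. Qed.

Lemma surv_robber_to_cop_side m i j k :
  (forall i', i' != i -> S m false (inl i) (inl i') = k) ->
  S m.+1 true (inl i) (inr j) = k * avoid_prob R v.
Proof.
move=> Sk; rewrite /= avg_Kvw_nbrs_inr.
rewrite (avg_const_but1 (k := k) (in_setT i)) ?cardsT ?card_ord //= ?eqxx //.
by move=> i' _ i'i; rewrite (inj_eq (@inl_inj _ _)) (negbTE i'i) Sk.
Qed.

Lemma surv_cop_cross_over m i i' k (j0 : 'I_w) : i != i' ->
  (forall j, S m true (inr j) (inl i') = k) ->
  S m.+1 false (inl i) (inl i') = k.
Proof.
move=> ii' Sk; rewrite /= (Kvw_dir_nbrs_same ii') avg_Kvw_nbrs_inl.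
rewrite (avg_const (k := k) (in_setT j0)) => [|j _ /=]; last by rewrite Sk.
by rewrite -mulrDl addrC subrK mul1r.
Qed.

Lemma surv_robber_from_cop_side m i i' k (j0 : 'I_w) :
  (forall j, S m false (inl i) (inr j) = k) ->
  S m.+1 true (inl i) (inl i') = k.
Proof.
move=> Sk; rewrite /= avg_Kvw_nbrs_inl.
by apply: (avg_const (in_setT j0)) => j _ /=; rewrite Sk.
Qed.

Lemma surv_cop_catch_or_miss m i j k :
  (forall j', j' != j -> S m true (inr j') (inr j) = k) ->
  S m.+1 false (inl i) (inr j) = theta * (k * avoid_prob R w).
Proof.
move=> Sk; rewrite /= dir_nbrs_adj // avg_set1 eqxx mulr0 addr0 avg_Kvw_nbrs_inl.
rewrite (avg_const_but1 (k := k) (in_setT j)) ?cardsT ?card_ord //= ?eqxx //.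
by move=> j' _ j'j; rewrite (inj_eq (@inr_inj _ _)) (negbTE j'j) Sk.
Qed.

End CompleteBipartite.

Section ClosedForms.
Variables (R : realFieldType) (theta : R).

Definition free_cross (m : nat) (a b : R) : R :=
  a ^+ ((m + 3) %/ 4) * b ^+ ((m + 1) %/ 4).

Definition free_same (m : nat) (a b : R) : R :=
  theta ^+ (m %/ 2) * a ^+ (m %/ 4) * b ^+ ((m + 2) %/ 4).

Lemma free_crossSS m a b : free_cross m.+2 a b = free_cross m b a * a.
Proof.
rewrite /free_cross (_ : (m.+2 + 3) %/ 4 = ((m + 1) %/ 4).+1)%N; last by lia.
by rewrite (_ : (m.+2 + 1) %/ 4 = (m + 3) %/ 4)%N; [rewrite exprS; ring | lia].
Qed.

Lemma free_sameSS m a b : free_same m.+2 a b = theta * (free_same m b a * b).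
Proof.
rewrite /free_same (_ : m.+2 %/ 2 = (m %/ 2).+1)%N; last by lia.
rewrite (_ : m.+2 %/ 4 = (m + 2) %/ 4)%N; last by rewrite addn2.
rewrite (_ : (m.+2 + 2) %/ 4 = (m %/ 4).+1)%N; last by lia.
by rewrite !exprS; ring.
Qed.

Lemma surv_Kvw_closed_form m v w : (0 < v)%N -> (0 < w)%N ->
  (forall i j, surv (@Kvw_adj v w) theta m true (inl i) (inr j) =
               free_cross m (avoid_prob R v) (avoid_prob R w)) /\
  (forall i i', i != i' -> surv (@Kvw_adj v w) theta m true (inl i) (inl i') =
               free_same m (avoid_prob R v) (avoid_prob R w)).
Proof.
elim/ltn_ind: m v w => -[|[|m]] IH v w v0 w0; have j0 : 'I_w := Ordinal w0.
- by split=> *; rewrite /free_cross /free_same !expr0 !mulr1.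
- split=> [i j|i i' _].
    rewrite /free_cross expr1 expr0 mulr1 -[avoid_prob R v]mul1r.
    exact: surv_robber_to_cop_side.
  rewrite /free_same !expr0 !mulr1.
  exact: (surv_robber_from_cop_side _ j0).
have [cross same] := IH m (leqW (ltnSn m)) w v w0 v0.
split=> [i j|i i' ii'].
  rewrite free_crossSS; apply: surv_robber_to_cop_side => i' i'i.
  apply: (surv_cop_cross_over j0); first by rewrite eq_sym.
  by move=> j'; rewrite -surv_Kvw_flip cross.
rewrite free_sameSS; apply: (surv_robber_from_cop_side _ j0) => j.
apply: surv_cop_catch_or_miss => j' j'j.
by rewrite -surv_Kvw_flip same // eq_sym.
Qed.

End ClosedForms.

Theorem mainTheorem4 (R : realFieldType) (v w : nat) (theta : R) :
  (0 < v)%N -> (0 < w)%N -> 0 <= theta <= 1 ->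
  let P := @Pfree (Kvw_vertex v w) (@Kvw_adj v w) R theta in
  let a := (v%:R - 1) / v%:R : R in
  let b := (w%:R - 1) / w%:R : R in
  forall m : nat,
  (* Position 1: cop in V, robber in W *)
  (forall (i : 'I_v) (j : 'I_w),
     P m (inl i) (inr j) = a ^+ ((m + 3) %/ 4) * b ^+ ((m + 1) %/ 4)) /\
  (* Position 2: cop and robber at distinct vertices of V *)
  (forall (i i' : 'I_v), i != i' ->
     P m (inl i) (inl i') =
       theta ^+ (m %/ 2) * a ^+ (m %/ 4) * b ^+ ((m + 2) %/ 4)) /\
  (* Position 3: robber in V, cop in W *)
  (forall (i : 'I_v) (j : 'I_w),
     P m (inr j) (inl i) = a ^+ ((m + 1) %/ 4) * b ^+ ((m + 3) %/ 4)) /\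
  (* Position 4: cop and robber at distinct vertices of W *)
  (forall (j j' : 'I_w), j != j' ->
     P m (inr j) (inr j') =
       theta ^+ (m %/ 2) * a ^+ ((m + 2) %/ 4) * b ^+ (m %/ 4)).
Proof.
move=> v0 w0 _ P a b m.
have [cross same] := surv_Kvw_closed_form theta m v0 w0.
have [cross' same'] := surv_Kvw_closed_form theta m w0 v0.
split; first exact: cross.
split; first exact: same.
split=> [i j|j j' jj'].
  by rewrite /P /Pfree -surv_Kvw_flip cross' /free_cross mulrC.
rewrite /P /Pfree -surv_Kvw_flip same' // /free_same -!mulrA.
by congr (_ * _); rewrite mulrC.
Qed.
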